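(* Assume $G\in\mathcal{RH}_\infty$ and that $v$ is measurable, so the controller has the form $u=K\begin{bmatrix} y\\ v\end{bmatrix}$. Then $K$ is an output-rectifying retrofit controller if and only if $$K=\hat K R,\qquad R:=\begin{bmatrix} I & -G_{yv}\end{bmatrix},$$ where $\hat K$ is a stabilizing controller for $G_{yu}$. (That is, $K$ first forms the rectified output $\hat y=y-G_{yv}v$ and then applies $u=\hat K\hat y$.)
   Context: A subsystem is a proper real rational transfer matrix $G$ with inputs $(v,d,u)$ (interaction input, disturbance input, control input) and outputs $(w,z,y)$ (interaction output, evaluation output, measurement output), with blocks $G_{ab}$ denoting the transfer matrix from input $b$ to output $a$. $\mathcal{RH}_\infty$ is the set of stable, proper, real rational transfer matrices. For transfer matrices $H$ and $C$, $C$ is a stabilizing controller for $H$ if the positive feedback loop $y=Hu$, $u=Cy$ is internally stable (for $H\in\mathcal{RH}_\infty$ these are exactly $C=(I+\hat QH)^{-1}\hat Q$, $\hat Q\in\mathcal{RH}_\infty$). When $v$ is measurable, the measurement output is augmented to $(y,v)$ with $G_{(y,v)v}:=\begin{bmatrix} G_{yv}\\ I\end{bmatrix}$, $G_{(y,v)u}:=\begin{bmatrix} G_{yu}\\ 0\end{bmatrix}$. A controller $u=K\begin{bmatrix} y\\ v\end{bmatrix}$ is an output-rectifying retrofit controller if $K=(I+QG_{(y,v)u})^{-1}Q$ for some $Q\in\mathcal{RH}_\infty$ with $Q\,G_{(y,v)v}=0$. *)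

From HB Require Import structures.
From mathcomp Require Import all_boot all_order all_algebra.
Set Implicit Arguments. Unset Strict Implicit. Unset Printing Implicit Defensive.
Import Order.TTheory GRing.Theory Num.Theory.
Local Open Scope ring_scope.

(* Real rational functions in the variable s, with real coefficients in an
   arbitrary real closed field R (the reals being the intended instance). *)
Definition ratfun (R : rcfType) := {fraction {poly R}}.

Definition poly2frac (R : rcfType) (p : {poly R}) : ratfun R :=
  @FracField.tofrac _ p.

(* Complex numbers a + i b represented as pairs over R; evaluation of a real
   polynomial at a complex point (Horner scheme). *)
Definition cmul (R : rcfType) (x y : R * R) : R * R :=
  (x.1 * y.1 - x.2 * y.2, x.1 * y.2 + x.2 * y.1).
Definition cadd (R : rcfType) (x y : R * R) : R * R := (x.1 + y.1, x.2 + y.2).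
Definition ceval (R : rcfType) (p : {poly R}) (z : R * R) : R * R :=
  foldr (fun c acc => cadd (cmul acc z) (c, 0)) (0, 0) (polyseq p).

Definition hurwitz (R : rcfType) (q : {poly R}) : Prop :=
  forall a b : R, 0 <= a -> ceval q (a, b) <> (0, 0).

Definition RHinf (R : rcfType) (f : ratfun R) : Prop :=
  exists p q : {poly R},
    [/\ q != 0, f = poly2frac p / poly2frac q, (size p <= size q)%N & hurwitz q].

Definition RHinf_mx (R : rcfType) m n (M : 'M[ratfun R]_(m, n)) : Prop :=
  forall i j, RHinf (M i j).

(* C (m x p) is a stabilizing controller for H (p x m) in the positive feedback
   loop y = H u + d2, u = C y + d1: the loop is well defined (I - H C invertible)
   and all four closed-loop maps (d1,d2) -> (u,y) are in RH_infinity. *)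
Definition stabilizing (R : rcfType) p m
    (H : 'M[ratfun R]_(p, m)) (C : 'M[ratfun R]_(m, p)) : Prop :=
  [/\ (1%:M - H *m C) \in unitmx,
      RHinf_mx (invmx (1%:M - C *m H)),
      RHinf_mx (invmx (1%:M - C *m H) *m C),
      RHinf_mx (invmx (1%:M - H *m C) *m H)
    & RHinf_mx (invmx (1%:M - H *m C))].

(* Blocks of the subsystem G with inputs (v,d,u) and outputs (w,z,y). *)
Section Blocks.
Variables (R : rcfType) (nw nz ny nv nd nu : nat).
Variable G : 'M[ratfun R]_(nw + (nz + ny), nv + (nd + nu)).
Definition G_yv : 'M[ratfun R]_(ny, nv) := lsubmx (dsubmx (dsubmx G)).
Definition G_yu : 'M[ratfun R]_(ny, nu) := rsubmx (rsubmx (dsubmx (dsubmx G))).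
(* augmented measurement output (y, v) *)
Definition G_yvv : 'M[ratfun R]_(ny + nv, nv) := col_mx G_yv 1%:M.
Definition G_yvu : 'M[ratfun R]_(ny + nv, nu) := col_mx G_yu 0.
End Blocks.

Definition output_rectifying_retrofit (R : rcfType) (nw nz ny nv nd nu : nat)
    (G : 'M[ratfun R]_(nw + (nz + ny), nv + (nd + nu)))
    (K : 'M[ratfun R]_(nu, ny + nv)) : Prop :=
  exists Q : 'M[ratfun R]_(nu, ny + nv),
    [/\ RHinf_mx Q,
        Q *m G_yvv G = 0,
        (1%:M + Q *m G_yvu G) \in unitmx
      & K = invmx (1%:M + Q *m G_yvu G) *m Q].

From HB Require Import structures.
From mathcomp Require Import all_boot all_order all_algebra.
From mathcomp Require Import complex.
Set Implicit Arguments. Unset Strict Implicit. Unset Printing Implicit Defensive.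
Import GRing.Theory.
Local Open Scope ring_scope.

(* The proof separates the analytic content from pure matrix algebra.
   1. Stability: RH_infinity is a subring of the rational functions (its
      denominators have no zeros in the closed right half plane, a property
      closed under products since evaluation at a complex point is a ring
      morphism), hence stable matrices are closed under +, -, *, and blocks.
   2. Youla parametrization, over any commutative ring with units: for a
      plant H, the parameter Q with 1 + Q H invertible gives the controller
      C = (1 + Q H)^-1 Q, whose closed-loop maps are 1 + Q H, Q, 1 + H Q and
      (1 + H Q) H; conversely every controller with 1 - C H invertible arises
      from Q = (1 - C H)^-1 C.  Hence for a stable plant, C is stabilizing iff
      it comes from a stable parameter Q.
   3. Rectification: Q [G_yv; I] = 0 holds iff Q = Q1 [I, -G_yv] with Q1 the
      left block of Q, and then Q [G_yu; 0] = Q1 G_yu.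
   The theorem follows: a retrofit parameter Q corresponds to the Youla
   parameter Q1 of G_yu, and K = (1 + Q1 G_yu)^-1 Q1 [I, -G_yv]. *)

Section StableScalars.
Variable R : rcfType.

Lemma ceval_complex (p : {poly R}) a b :
  ceval p (a, b) =
  (Re (map_poly (real_complex R) p).[Complex a b],
   Im (map_poly (real_complex R) p).[Complex a b]).
Proof.
rewrite map_polyE horner_Poly /ceval.
elim: (polyseq p) => [|c s IH] //=.
by rewrite IH /cmul /cadd /=; case: (horner_rec _ _).
Qed.

Lemma hurwitzM (p q : {poly R}) : hurwitz p -> hurwitz q -> hurwitz (p * q).
Proof.
move=> hp hq a b ha; rewrite ceval_complex rmorphM hornerM => -[e1 e2].
have : (map_poly (real_complex R) p).[Complex a b] *
       (map_poly (real_complex R) q).[Complex a b] = 0.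
  by case: (_ * _) e1 e2 => x y /= -> ->.
move/eqP; rewrite mulf_eq0 => /orP[] /eqP e.
- by apply: (hp a b ha); rewrite ceval_complex e.
- by apply: (hq a b ha); rewrite ceval_complex e.
Qed.

Lemma hurwitz1 : hurwitz (1 : {poly R}).
Proof.
move=> a b _; rewrite ceval_complex rmorph1 hornerC /= => -[].
by apply/eqP; rewrite oner_eq0.
Qed.

Lemma RHinf0 : @RHinf R 0.
Proof.
exists 0, 1; split; rewrite ?oner_eq0 ?size_poly0 //; last exact: hurwitz1.
by rewrite /poly2frac tofrac0 mul0r.
Qed.

Lemma RHinf1 : @RHinf R 1.
Proof.
exists 1, 1; split; rewrite ?oner_eq0 //; last exact: hurwitz1.
by rewrite /poly2frac tofrac1 divr1.
Qed.

Lemma RHinfN (f : ratfun R) : RHinf f -> RHinf (- f).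
Proof.
case=> p [q [q0 -> sz hq]]; exists (- p), q; split => //.
  by rewrite /poly2frac tofracN mulNr.
by rewrite size_polyN.
Qed.

(* Properness is preserved because sizes add (minus one) under products. *)
Lemma RHinfM (f g : ratfun R) : RHinf f -> RHinf g -> RHinf (f * g).
Proof.
case=> p1 [q1 [q10 -> s1 h1]]; case=> p2 [q2 [q20 -> s2 h2]].
exists (p1 * p2), (q1 * q2); split.
- by rewrite mulf_neq0.
- by rewrite /poly2frac !tofracM mulf_div.
- rewrite (size_mul q10 q20); apply: (leq_trans (size_polyMleq p1 p2)).
  by rewrite -!subn1 leq_sub2r // leq_add.
- exact: hurwitzM.
Qed.

(* Sum over the common denominator q1 q2. *)
Lemma RHinfD (f g : ratfun R) : RHinf f -> RHinf g -> RHinf (f + g).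
Proof.
case=> p1 [q1 [q10 -> s1 h1]]; case=> p2 [q2 [q20 -> s2 h2]].
exists (p1 * q2 + p2 * q1), (q1 * q2); split.
- by rewrite mulf_neq0.
- rewrite addf_div ?/poly2frac ?tofrac_eq0 //.
  by rewrite !tofracM tofracD !tofracM.
- apply: (leq_trans (size_polyD _ _)).
  rewrite (size_mul q10 q20) geq_max; apply/andP; split.
  + apply: (leq_trans (size_polyMleq _ _)).
    by rewrite -!subn1 leq_sub2r // leq_add.
  + apply: (leq_trans (size_polyMleq _ _)).
    by rewrite addnC -!subn1 leq_sub2r // leq_add.
- exact: hurwitzM.
Qed.

End StableScalars.

Section StableMatrices.
Variable R : rcfType.
Implicit Types m n p : nat.

Lemma RHmx0 m n : RHinf_mx (0 : 'M[ratfun R]_(m, n)).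
Proof. by move=> i j; rewrite mxE; exact: RHinf0. Qed.

Lemma RHmx1 n : RHinf_mx (1%:M : 'M[ratfun R]_n).
Proof. by move=> i j; rewrite mxE; case: (i == j); [exact: RHinf1 | exact: RHinf0]. Qed.

Lemma RHmxD m n (A B : 'M[ratfun R]_(m, n)) :
  RHinf_mx A -> RHinf_mx B -> RHinf_mx (A + B).
Proof. by move=> hA hB i j; rewrite mxE; apply: RHinfD. Qed.

Lemma RHmxN m n (A : 'M[ratfun R]_(m, n)) : RHinf_mx A -> RHinf_mx (- A).
Proof. by move=> hA i j; rewrite mxE; apply: RHinfN. Qed.

Lemma RHmxM m n p (A : 'M[ratfun R]_(m, n)) (B : 'M[ratfun R]_(n, p)) :
  RHinf_mx A -> RHinf_mx B -> RHinf_mx (A *m B).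
Proof.
move=> hA hB i j; rewrite mxE.
apply: (big_ind (@RHinf R)); first exact: RHinf0.
  by move=> x y; apply: RHinfD.
by move=> k _; apply: RHinfM.
Qed.

Lemma RHmx_row m n1 n2 (A : 'M[ratfun R]_(m, n1)) (B : 'M[ratfun R]_(m, n2)) :
  RHinf_mx A -> RHinf_mx B -> RHinf_mx (row_mx A B).
Proof. by move=> hA hB i j; rewrite mxE; case: splitP. Qed.

Lemma RHmx_lsub m n1 n2 (A : 'M[ratfun R]_(m, n1 + n2)) :
  RHinf_mx A -> RHinf_mx (lsubmx A).
Proof. by move=> hA i j; rewrite mxE. Qed.

Lemma RHmx_blocks (nw nz ny nv nd nu : nat)
    (G : 'M[ratfun R]_(nw + (nz + ny), nv + (nd + nu))) :
  RHinf_mx G -> RHinf_mx (G_yv G) /\ RHinf_mx (G_yu G).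
Proof. by move=> hG; split=> i j; rewrite !mxE. Qed.

End StableMatrices.

Section Youla.
Variables (R : comUnitRingType) (m p : nat) (H : 'M[R]_(p, m)).

Lemma invmx_rinv n (A B : 'M[R]_n) : A *m B = 1%:M -> invmx A = B.
Proof.
move=> AB; have [uA _] := mulmx1_unit AB.
by rewrite -[invmx A]mulmx1 -AB mulmxA mulVmx // mul1mx.
Qed.

Definition youla (Q : 'M[R]_(m, p)) : 'M[R]_(m, p) :=
  invmx (1%:M + Q *m H) *m Q.

Section FromParameter.
Variable Q : 'M[R]_(m, p).
Hypothesis unitQH : (1%:M + Q *m H) \in unitmx.

Lemma youla_1BCH : 1%:M - youla Q *m H = invmx (1%:M + Q *m H).
Proof.
apply/eqP; rewrite subr_eq -mulmxA -{1}(mulmx1 (invmx _)) -mulmxDr.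
by rewrite mulVmx.
Qed.

Lemma youla_1BHC : (1%:M - H *m youla Q) *m (1%:M + H *m Q) = 1%:M.
Proof.
have HCQ : H *m youla Q + H *m youla Q *m (H *m Q) = H *m Q.
  rewrite -mulmxA -mulmxDr; congr (H *m _).
  rewrite /youla -[RHS](mulKmx unitQH) mulmxDl mul1mx mulmxDr.
  by rewrite !mulmxA.
by rewrite mulmxDr mulmx1 mulmxBl mul1mx -[X in _ + (X - _)]HCQ addrK subrK.
Qed.

Lemma youla_loop_input : invmx (1%:M - youla Q *m H) *m youla Q = Q.
Proof. by rewrite youla_1BCH invmxK /youla (mulKVmx unitQH). Qed.

End FromParameter.

(* Push-through: 1 - H C invertible implies 1 - C H invertible, with inverse
   1 + C (1 - H C)^-1 H. *)
Lemma unitmx_1B_swap (C : 'M[R]_(m, p)) :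
  (1%:M - H *m C) \in unitmx -> (1%:M - C *m H) \in unitmx.
Proof.
move=> U; set M := invmx (1%:M - H *m C).
have HM : (1%:M - H *m C) *m (M *m H) = H by rewrite mulmxA mulmxV // mul1mx.
have CMH : (1%:M - C *m H) *m (C *m M *m H) = C *m H.
  rewrite mulmxBl mul1mx -!mulmxA -mulmxBr; congr (C *m _).
  by rewrite -[X in _ = X]HM mulmxBl mul1mx !mulmxA.
have inv : (1%:M - C *m H) *m (1%:M + C *m M *m H) = 1%:M.
  by rewrite mulmxDr mulmx1 CMH subrK.
by case: (mulmx1_unit inv).
Qed.

Lemma youla_param (C : 'M[R]_(m, p)) :
  (1%:M - C *m H) \in unitmx ->
  let Q := invmx (1%:M - C *m H) *m C in
  1%:M + Q *m H = invmx (1%:M - C *m H) /\ youla Q = C.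
Proof.
move=> U Q.
have QH : 1%:M + Q *m H = invmx (1%:M - C *m H).
  by rewrite -mulmxA -{1}(mulVmx U) -mulmxDr subrK mulmx1.
by split=> //; rewrite /youla QH invmxK mulKVmx.
Qed.

End Youla.

Section StableYoula.
Variables (R : rcfType) (m p : nat) (H : 'M[ratfun R]_(p, m)).
Hypothesis stableH : RHinf_mx H.

(* A stable parameter yields a stabilizing controller: its four closed-loop
   maps are 1 + Q H, Q, (1 + H Q) H and 1 + H Q. *)
Lemma stabilizing_youla (Q : 'M[ratfun R]_(m, p)) :
  RHinf_mx Q -> (1%:M + Q *m H) \in unitmx -> stabilizing H (youla H Q).
Proof.
move=> stableQ U.
have E := youla_1BHC U; have [UN _] := mulmx1_unit E.
rewrite /stabilizing (youla_loop_input U) (youla_1BCH U) invmxK (invmx_rinv E).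
have stableHQ : RHinf_mx (1%:M + H *m Q).
  by apply: RHmxD; [exact: RHmx1 | exact: RHmxM].
split; [exact: UN | | exact: stableQ | exact: RHmxM | exact: stableHQ].
by apply: RHmxD; [exact: RHmx1 | exact: RHmxM].
Qed.

(* Conversely, every stabilizing controller comes from a stable parameter
   (this direction does not need the plant to be stable). *)
Lemma youla_stabilizing (C : 'M[ratfun R]_(m, p)) :
  stabilizing H C ->
  exists Q, [/\ RHinf_mx Q, (1%:M + Q *m H) \in unitmx & C = youla H Q].
Proof.
case=> U _ stableQ _ _; have U' := unitmx_1B_swap U.
have [QH CQ] := youla_param U'.
by exists (invmx (1%:M - C *m H) *m C); rewrite QH unitmx_inv CQ.
Qed.

End StableYoula.

Section Rectifier.
Variables (R : pzRingType) (ny nv : nat) (Gv : 'M[R]_(ny, nv)).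

Lemma rectifier_annihilates : row_mx 1%:M (- Gv) *m col_mx Gv 1%:M = 0.
Proof. by rewrite mul_row_col mul1mx mulmx1 addrN. Qed.

Lemma rectifier_control nu (Gu : 'M[R]_(ny, nu)) :
  row_mx 1%:M (- Gv) *m col_mx Gu 0 = Gu.
Proof. by rewrite mul_row_col mul1mx mulmx0 addr0. Qed.

Lemma annihilator_factor k (Q : 'M[R]_(k, ny + nv)) :
  Q *m col_mx Gv 1%:M = 0 -> Q = lsubmx Q *m row_mx 1%:M (- Gv).
Proof.
rewrite -{1}[Q]hsubmxK mul_row_col mulmx1 => /eqP; rewrite addr_eq0 => /eqP Q2.
by rewrite mul_mx_row mulmx1 mulmxN Q2 opprK hsubmxK.
Qed.

End Rectifier.

Theorem proposition1 (R : rcfType) (nw nz ny nv nd nu : nat)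
    (G : 'M[ratfun R]_(nw + (nz + ny), nv + (nd + nu)))
    (HG : RHinf_mx G)
    (K : 'M[ratfun R]_(nu, ny + nv)) :
  output_rectifying_retrofit G K <->
  exists Khat : 'M[ratfun R]_(nu, ny),
    stabilizing (G_yu G) Khat /\
    K = Khat *m row_mx 1%:M (- G_yv G).
Proof.
have [stableGv stableGu] := RHmx_blocks HG.
rewrite /output_rectifying_retrofit /G_yvv /G_yvu.
split.
- case=> Q [stableQ /annihilator_factor EQ U ->].
  have QGu : Q *m col_mx (G_yu G) 0 = lsubmx Q *m G_yu G.
    by rewrite {1}EQ -mulmxA rectifier_control.
  rewrite QGu in U *; exists (youla (G_yu G) (lsubmx Q)); split.
    by apply: (stabilizing_youla stableGu) U; exact: RHmx_lsub.
  by rewrite /youla -mulmxA -EQ.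
- case=> Kh [/youla_stabilizing [Q [stableQ U ->]] ->].
  exists (Q *m row_mx 1%:M (- G_yv G)).
  rewrite -!mulmxA rectifier_control rectifier_annihilates mulmx0; split=> //.
  by apply: RHmxM => //; apply: RHmx_row; [exact: RHmx1 | exact: RHmxN].
Qed.
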